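(* Let $T(n)=(3n+1)/2^{v_2(3n+1)}$ be the Syracuse map. For odd $n$ let $L=L(n)=v_2(n+1)-1$, $r=r(n)=v_2(3T^{L}(n)+1)$, and $X(n)=(L+1)\log_2 3-(L+r)$. Consider the distribution of $X$ under natural density on odd starts (the probability law assigning to each value $x$ the natural density, among odd positive integers, of $\{n: X(n)=x\}$). Then: (1) its moment generating function is $$M_X(t)=\mathbb E[e^{tX}]=\frac{e^{t(\log_2 3-2)}}{4\bigl(1-\tfrac12 e^{t(\log_2 3-1)}\bigr)\bigl(1-\tfrac12 e^{-t}\bigr)}$$ for $-\ln 2<t<\ln 2/(\log_2 3-1)$; (2) $\mathbb E[X]=2\log_2 3-4\approx-0.8301$ and $\mathrm{Var}(X)=2\bigl((\log_2 3-1)^2+1\bigr)\approx 2.684$.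
   Context: $v_2$ is the $2$-adic valuation; $T^j$ the $j$-th iterate; $\ln$ is the natural logarithm. *)

From HB Require Import structures.
From mathcomp Require Import all_boot all_order all_algebra.
From mathcomp Require Import all_classical all_reals all_analysis.
Set Implicit Arguments. Unset Strict Implicit. Unset Printing Implicit Defensive.
Import Order.TTheory GRing.Theory Num.Theory.
Import numFieldNormedType.Exports.
Local Open Scope classical_set_scope.
Local Open Scope ring_scope.

Definition v2 (m : nat) : nat := logn 2 m.

Definition syracuse (n : nat) : nat := (3 * n + 1) %/ 2 ^ v2 (3 * n + 1).

Definition Lval (n : nat) : nat := (v2 n.+1).-1.

Definition rval (n : nat) : nat := v2 (3 * iter (Lval n) syracuse n + 1).

Section Reals.
Variable R : realType.

Definition log2_3 : R := ln 3 / ln 2.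

Definition Xval (n : nat) : R :=
  (Lval n).+1%:R * log2_3 - (Lval n + rval n)%:R.

Definition odd_ratio (P : nat -> bool) (N : nat) : R :=
  (count (fun n => odd n && P n) (iota 1 N))%:R /
  (count odd (iota 1 N))%:R.

Definition odd_density (P : nat -> bool) : R := lim (odd_ratio P @ \oo).

Definition X_law (x : R) : R := odd_density (fun n => Xval n == x).

Definition law_expect (p : R -> R) (f : R -> R) : \bar R :=
  (\esum_(x in [set: R]) (Num.max (p x * f x) 0)%:E -
   \esum_(x in [set: R]) (Num.max (- (p x * f x)) 0)%:E)%E.

Definition law_var (p : R -> R) : \bar R :=
  law_expect p (fun x => (x - fine (law_expect p id)) ^+ 2).

End Reals.

From HB Require Import structures.
From mathcomp Require Import all_boot all_order all_algebra.
From mathcomp Require Import all_classical all_reals all_analysis.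
From mathcomp Require Import zify ring lra.
Set Implicit Arguments. Unset Strict Implicit. Unset Printing Implicit Defensive.
Import Order.TTheory GRing.Theory Num.Theory.
Import numFieldNormedType.Exports.

(* For odd n write n + 1 = 2^(L+1) w with w odd, where L = L(n).  A Syracuse
   step maps n + 1 = 2^(s+2) m to T(n) + 1 = 2^(s+1) 3m, so
   T^L(n) + 1 = 2 3^L w and r(n) = 1 + v_2(3^(L+1) w - 1).  As 3 is invertible
   modulo 2^(j+2), the condition r(n) = j + 2 fixes w modulo 2^(j+2): the odd n
   with L(n) = l and r(n) = j + 2 form one residue class of n + 1 modulo
   2^(l+1) 2^(j+2), of density 2^-(l+1) 2^-(j+1) among odd numbers.  Since
   log_2 3 is irrational, distinct pairs (L, r) give distinct values of X, so X
   has the law of (L+1) log_2 3 - (L + r) with L and r - 2 independent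
   geometric variables of parameter 1/2, and its moments are sums of
   polynomial-times-geometric series. *)

Lemma v2_pow2_odd e w : odd w -> v2 (2 ^ e * w) = e.
Proof.
move=> odd_w; rewrite /v2 lognM ?expn_gt0 ?pfactorK //; last by case: w odd_w.
by rewrite logn_coprime ?addn0 // coprime2n.
Qed.

Lemma v2_double y : 0 < y -> v2 (2 * y) = (v2 y).+1.
Proof. by move=> y_gt0; rewrite /v2 lognM // (pfactorK 1 (isT : prime 2)). Qed.

Lemma v2_eq_mod y e : 0 < y -> (v2 y == e) = (y %% 2 ^ e.+1 == 2 ^ e).
Proof.
move=> y_gt0; apply/eqP/eqP => [<- | y_mod].
  have [w /[!coprime2n] odd_w {1}->] := pfactor_coprime (isT : prime 2) y_gt0.
  rewrite -(odd_double_half w) odd_w mulnDl mul1n -muln2 -mulnA -expnS -/(v2 y).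
  by rewrite addnC modnMDl modn_small // ltn_exp2l.
have dvd_e : 2 ^ e %| y.
  by rewrite (divn_eq y (2 ^ e.+1)) y_mod dvdn_add // dvdn_mull // dvdn_exp2l.
have ndvd_Se : ~~ (2 ^ e.+1 %| y) by rewrite /dvdn y_mod -lt0n expn_gt0.
move: dvd_e ndvd_Se; rewrite !pfactor_dvdn // -ltnNge ltnS => ? ?.
by apply/eqP; rewrite eqn_leq; apply/andP.
Qed.

Lemma syracuse_succ n s m : n.+1 = 2 ^ s.+2 * m -> 0 < m ->
  (syracuse n).+1 = 2 ^ s.+1 * (3 * m).
Proof.
move=> nE m_gt0; set k := 2 ^ s * m.
have k_gt0 : 0 < k by rewrite muln_gt0 expn_gt0.
have nE' : n.+1 = 4 * k by rewrite nE /k !expnS; lia.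
rewrite /syracuse (_ : 3 * n + 1 = 2 ^ 1 * (3 * k - 1).*2.+1); last first.
  by rewrite -muln2; lia.
rewrite v2_pow2_odd /= ?odd_double // mulKn // /k !expnS; lia.
Qed.

Lemma iter_syracuse_succ s n m : n.+1 = 2 ^ s.+1 * m -> 0 < m ->
  (iter s syracuse n).+1 = 2 * 3 ^ s * m.
Proof.
elim: s n m => [|s IHs] n m nE m_gt0; first by rewrite nE expn1 muln1.
rewrite iterSr (IHs _ _ (syracuse_succ nE m_gt0)) ?muln_gt0 //.
by rewrite expnS !mulnA (mulnAC 2 3).
Qed.

Lemma odd_succ_decomp n : odd n -> exists2 w, odd w & n.+1 = 2 ^ (Lval n).+1 * w.
Proof.
move=> odd_n.
have [w /[!coprime2n] odd_w nE] := pfactor_coprime (isT : prime 2) (ltn0Sn n).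
exists w; rewrite // /Lval /v2 prednK; first by rewrite {1}nE mulnC.
by rewrite -(pfactor_dvdn 1) // expn1 dvdn2 /= odd_n.
Qed.

Lemma Lval_rvalE n l w : n.+1 = 2 ^ l.+1 * w -> odd w ->
  [/\ odd n, Lval n = l & rval n = (v2 (3 ^ l.+1 * w - 1)).+1].
Proof.
move=> nE odd_w; have w_gt0 := odd_gt0 odd_w.
have odd_n : odd n by move/(congr1 odd): (nE); rewrite /= expnS !oddM => /negbFE.
have Ln : Lval n = l by rewrite /Lval nE v2_pow2_odd.
split => //; rewrite /rval Ln.
have := iter_syracuse_succ nE w_gt0; set z := iter _ _ _ => zE.
have Yw_gt0 : 0 < 3 ^ l * w by rewrite muln_gt0 expn_gt0.
have -> : 3 * z + 1 = 2 * (3 ^ l.+1 * w - 1) by rewrite expnS; lia.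
by rewrite v2_double // expnS; lia.
Qed.

Lemma rval_ge2 n : odd n -> 1 < rval n.
Proof.
move=> /odd_succ_decomp [w odd_w nE]; have [_ _ ->] := Lval_rvalE nE odd_w.
have Yw_ge3 : 3 <= 3 ^ (Lval n).+1 * w.
  by rewrite expnS -mulnA leq_pmulr // muln_gt0 expn_gt0 (odd_gt0 odd_w).
rewrite ltnS /v2 -(pfactor_dvdn 1) ?expn1 ?dvdn2 ?oddB ?oddM ?oddX ?odd_w //; lia.
Qed.

Lemma v2_mulB1_residue Y j : odd Y -> 1 < Y ->
  exists m, [/\ odd m, m < 2 ^ j.+2 & forall w, 0 < w ->
    (v2 (Y * w - 1) == j.+1) = (w %% 2 ^ j.+2 == m)].
Proof.
move=> odd_Y Y_gt1; set M := 2 ^ j.+2; set c := 2 ^ j.+1 + 1.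
have Y_gt0 : 0 < Y by apply: ltnW.
have [u k uE _] := egcdnP M Y_gt0.
have /eqP coYM : coprime Y M by rewrite /M coprimeXr // coprimen2 odd_Y.
rewrite coYM in uE.
have Yu : Y * u = 1 %[mod M] by rewrite mulnC uE modnMDl.
have c_lt_M : c < M.
  have : 0 < 2 ^ j by rewrite expn_gt0.
  rewrite /c /M !expnS; lia.
have M_gt1 : 1 < M := leq_ltn_trans (leq_addl _ _) c_lt_M.
exists (u * c %% M); split.
- have : odd (Y * u %% M) by rewrite Yu modn_small.
  by rewrite /M !odd_mod ?oddX // !oddM odd_Y /c oddD oddX => /= ->.
- by rewrite ltn_mod expn_gt0.
move=> w w_gt0; have Yw_gt1 : 1 < Y * w by rewrite (leq_trans Y_gt1) ?leq_pmulr.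
rewrite v2_eq_mod ?subn_gt0 // -/M.
rewrite -[X in _ == X](@modn_small (2 ^ j.+1) M); last first.
  exact: leq_ltn_trans (leq_addr 1 _) c_lt_M.
rewrite -(eqn_modDr 1) subnK 1?ltnW // -/c.
apply/eqP/eqP => [Ywc | wE].
  by rewrite -modnMmr -Ywc modnMmr mulnA (mulnC u) -modnMml Yu modnMml mul1n.
by rewrite -modnMmr wE modnMmr mulnA -modnMml Yu modnMml mul1n.
Qed.

Lemma Lval_rval_residue l j : exists b, [/\ b < 2 ^ l.+1 * 2 ^ j.+2, ~~ odd b &
  forall n, [&& odd n, Lval n == l & rval n == j.+2] =
            (n.+1 %% (2 ^ l.+1 * 2 ^ j.+2) == b)].
Proof.
set M := 2 ^ j.+2.
have [||m [odd_m m_lt_M residueP]] := @v2_mulB1_residue (3 ^ l.+1) j.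
- by rewrite oddX orbT.
- by rewrite -[1](expn0 3) ltn_exp2l.
exists (2 ^ l.+1 * m); split.
- by rewrite ltn_pmul2l ?expn_gt0.
- by rewrite oddM oddX.
move=> n; apply/idP/idP => [/and3P [odd_n /eqP Ln rn] | /eqP nE].
  have [w odd_w nE] := odd_succ_decomp odd_n.
  have [_ _ rE] := Lval_rvalE nE odd_w.
  move: rn; rewrite rE Ln eqSS residueP ?odd_gt0 // => /eqP wE.
  by rewrite nE Ln -muln_modr wE.
have {}nE : n.+1 = 2 ^ l.+1 * (n.+1 %/ (2 ^ l.+1 * M) * M + m).
  by rewrite {1}(divn_eq n.+1 (2 ^ l.+1 * M)) nE mulnDr mulnCA mulnA.
have odd_w : odd (n.+1 %/ (2 ^ l.+1 * M) * M + m).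
  by rewrite oddD oddM /M oddX andbF odd_m.
have [-> -> ->] := Lval_rvalE nE odd_w.
by rewrite eqSS residueP ?odd_gt0 // -/M modnMDl modn_small // !eqxx.
Qed.

Section ResidueCount.
Variables D b : nat.
Hypothesis b_lt_D : b < D.

Definition residue_count N := count (fun n => n.+1 %% D == b) (iota 1 N).

Lemma count_residue_iota x : count (fun k => k %% D == b) (iota x D) = 1.
Proof.
elim: x => [|x IHx].
  rewrite (@eq_in_count _ _ (pred1 b)).
    by rewrite count_uniq_mem ?iota_uniq // mem_iota add0n b_lt_D.
  by move=> k; rewrite mem_iota add0n => /andP [_ k_lt_D]; rewrite /= modn_small.
case: D b_lt_D IHx => // D' _ IHx.
rewrite (_ : iota x.+1 D'.+1 = iota x.+1 D' ++ [:: x.+1 + D']); last first.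
  by rewrite -[D'.+1]addn1 iotaD.
by rewrite count_cat /= addn0 -IHx /= addnC addSnnS modnDr.
Qed.

Lemma residue_countD N : residue_count (N + D) = (residue_count N).+1.
Proof.
rewrite /residue_count iotaD count_cat -[in RHS]addn1; congr (_ + _).
rewrite -[RHS](count_residue_iota N.+2) -[N.+2]add1n [in RHS]iotaDl count_map.
exact: eq_count.
Qed.

Lemma residue_count_le1 N : N <= D -> residue_count N <= 1.
Proof.
move=> le_N_D; rewrite -[1](count_residue_iota 2) -[2]add1n iotaDl count_map.
by rewrite /residue_count -(subnKC le_N_D) iotaD count_cat leq_addr.
Qed.

Lemma residue_count_bounds N :
  residue_count N * D <= N + D /\ N <= residue_count N * D + D.
Proof.
elim/ltn_ind: N => N IHN; have [le_N_D | lt_D_N] := leqP N D.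
  have := residue_count_le1 le_N_D; case: (residue_count N) => [|[|]] //; lia.
have D_gt0 : 0 < D by apply: leq_ltn_trans b_lt_D.
have [M NE] : exists M, N = M + D by exists (N - D); rewrite subnK // ltnW.
subst N; have [|] := IHN M; first lia.
rewrite residue_countD mulSn; move: (residue_count M * D) => cD.
by split; lia.
Qed.

End ResidueCount.

Local Open Scope classical_set_scope.
Local Open Scope ring_scope.

Lemma cvg_count_ratio (R : realType) (c : nat -> nat) D : (0 < D)%N ->
  (forall N, c N * D <= N + D)%N -> (forall N, N <= c N * D + D)%N ->
  (fun N => (c N)%:R / N%:R : R) @ \oo --> ((D%:R)^-1 : R).
Proof.
move=> D_gt0 c_le c_ge; apply/cvgrPdist_le => e e_gt0; near=> N.
have N_gt : e^-1 < N%:R by near: N; apply: nbhs_infty_gtr.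
have N_gt0 : (0 : R) < N%:R by apply: le_lt_trans N_gt; rewrite invr_ge0 ltW.
have D_gt0' : (0 : R) < D%:R by rewrite ltr0n.
have eN_gt1 : 1 < e * N%:R by rewrite -ltr_pdivrMl // mulrC mul1r.
have -> : (D%:R)^-1 - (c N)%:R / N%:R = (N%:R - (c N)%:R * D%:R) / (D%:R * N%:R) :> R.
  by field; rewrite ?gt_eqF.
have err : `|N%:R - (c N)%:R * D%:R| <= D%:R :> R.
  have := c_le N; have := c_ge N; rewrite -!(ler_nat R) !natrD natrM.
  by rewrite ler_norml => *; apply/andP; split; lra.
rewrite normrM normfV [`|D%:R * _|]ger0_norm ?mulr_ge0 ?ltW // ltr_pdivrMr ?mulr_gt0 //.
by rewrite (le_lt_trans err) // mulrCA ltr_pMr.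
Unshelve. all: by end_near. Qed.

Lemma odd_ratio_residue (R : realType) D b : (b < D)%N -> ~~ odd D -> ~~ odd b ->
  @odd_ratio R (fun n => n.+1 %% D == b)%N @ \oo --> (2 / D%:R : R).
Proof.
move=> b_lt_D even_D even_b.
have cvg_count D' b' : (b' < D')%N ->
    (fun N => (residue_count D' b' N)%:R / N%:R : R) @ \oo --> ((D'%:R)^-1 : R).
  move=> lt; apply: cvg_count_ratio (leq_ltn_trans (leq0n b') lt) _ _ => N.
  - exact: (proj1 (residue_count_bounds lt N)).
  - exact: (proj2 (residue_count_bounds lt N)).
have inv2_neq0 : (2^-1 : R) != 0 by rewrite invr_eq0 pnatr_eq0.
have -> : (2 / D%:R : R) = (D%:R)^-1 * (2^-1)^-1 by rewrite invrK mulrC.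
apply: cvg_trans (cvgM (cvg_count _ _ b_lt_D) (cvgV inv2_neq0 (cvg_count 2%N 0%N isT))).
apply: near_eq_cvg; near=> N.
have N_gt0 : (0 < N)%N by near: N; apply: nbhs_infty_gt.
rewrite /odd_ratio.
have -> : count (fun n => odd n && (n.+1 %% D == b)%N) (iota 1 N) = residue_count D b N.
  apply: eq_count => n /=; case: eqP => [nE|]; last by rewrite andbF.
  move/(congr1 odd): nE; rewrite odd_mod ?(negbTE even_D) //= (negbTE even_b).
  by move=> /negbFE ->.
have -> : count odd (iota 1 N) = residue_count 2 0 N.
  by apply: eq_count => n; rewrite modn2 /=; case: (odd n).
have : (0 < residue_count 2 0 N)%N by rewrite -(prednK N_gt0).
rewrite -(ltr0n R) => /lt0r_neq0 count_neq0 /=.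
by field; rewrite count_neq0 pnatr_eq0 -lt0n.
Unshelve. all: by end_near. Qed.

Section XLaw.
Variable R : realType.
Local Notation a := (log2_3 R).
Local Notation h := (2^-1 : R).

Definition Xof (l r : nat) : R := l.+1%:R * a - (l + r)%N%:R.

(* Indexed by j = r - 2, as r(n) >= 2 (see [rval_ge2]). *)
Definition Xmass (l j : nat) : R := h ^+ l.+1 * h ^+ j.+1.

Lemma log2_3_gt1 : 1 < a.
Proof.
have ln2_gt0 : (0 : R) < ln 2 by rewrite ln_gt0 // ltr1n.
by rewrite ltr_pdivlMr // mul1r ltr_ln ?posrE ?ltr0n // ltr_nat.
Qed.

Lemma natr_log2_3_eq0 p q1 q2 : p%:R * a + q1%:R = q2%:R -> p = 0%N.
Proof.
move=> pqE; have ln2_neq0 : ln 2 != 0 :> R by rewrite gt_eqF // ln_gt0 // ltr1n.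
have q_le : (q1 <= q2)%N.
  by rewrite -(ler_nat R) -pqE lerDr mulr_ge0 // ltW // (lt_trans ltr01 log2_3_gt1).
have pow_eq : (3 ^ p)%:R = (2 ^ (q2 - q1))%:R :> R.
  apply: ln_inj; rewrite ?posrE ?ltr0n ?expn_gt0 // !natrX !lnXn ?ltr0n //.
  rewrite -[ln 3 *+ _]mulr_natl -[ln 2 *+ _]mulr_natl natrB // -pqE addrK /log2_3.
  by field.
move/eqP: pow_eq; rewrite eqr_nat => /eqP pow_eq.
have /eqP q_eq : (q2 - q1 == 0)%N.
  by move/(congr1 odd): pow_eq; rewrite !oddX orbT orbF.
by apply/eqP; rewrite -(@eqn_exp2l 3) // pow_eq q_eq.
Qed.

Lemma Xof_inj l r l' r' : Xof l r = Xof l' r' -> l = l' /\ r = r'.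
Proof.
wlog le_l : l r l' r' / (l <= l')%N => [hwlog | XE].
  by case: (leqP l l') => [/hwlog h /h | /ltnW /hwlog h /esym /h [-> ->]].
have /natr_log2_3_eq0 dl0 : (l' - l)%N%:R * a + (l + r)%N%:R = (l' + r')%N%:R.
  by move: XE; rewrite /Xof natrB // -!natr1 !natrD; lra.
have ll : l = l' by apply/eqP; rewrite eqn_leq le_l -subn_eq0 dl0.
split => //; move: XE; rewrite /Xof ll => /addrI /oppr_inj /eqP.
by rewrite eqr_nat eqn_add2l => /eqP.
Qed.

Lemma Xval_eq_Xof n l r : (Xval R n == Xof l r) = (Lval n == l) && (rval n == r).
Proof. by apply/eqP/andP => [/Xof_inj [-> ->] | [/eqP <- /eqP <-]]. Qed.

Lemma Xmass_ge0 l j : 0 <= Xmass l j.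
Proof. by rewrite mulr_ge0 // exprn_ge0 // invr_ge0 ler0n. Qed.

Lemma odd_ratio_Xof l j :
  @odd_ratio R (fun n => Xval R n == Xof l j.+2) @ \oo --> Xmass l j.
Proof.
have [b [b_lt even_b levelE]] := Lval_rval_residue l j.
have -> : @odd_ratio R (fun n => Xval R n == Xof l j.+2) =
          @odd_ratio R (fun n => n.+1 %% (2 ^ l.+1 * 2 ^ j.+2) == b)%N.
  apply/funext => N; congr (_%:R / _); apply: eq_count => n.
  by rewrite -levelE Xval_eq_Xof; case: (odd n).
have -> : Xmass l j = 2 / (2 ^ l.+1 * 2 ^ j.+2)%:R.
  rewrite /Xmass natrM !natrX (exprS _ j.+1) !exprVn.
  by field; rewrite ?expf_neq0 ?pnatr_eq0.
by apply: odd_ratio_residue; rewrite // oddM oddX.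
Qed.

Lemma odd_ratio_off x : (forall l j, x != Xof l j.+2) ->
  @odd_ratio R (fun n => Xval R n == x) = fun=> 0.
Proof.
move=> x_off; apply/funext => N.
rewrite /odd_ratio (@eq_count _ _ pred0) ?count_pred0 ?mul0r //.
move=> n /=; apply/negP => /andP [odd_n /eqP xE].
have /subnK rE := rval_ge2 odd_n.
by have /eqP := x_off (Lval n) (rval n - 2)%N; rewrite addn2 in rE; rewrite rE -xE.
Qed.

Lemma X_law_Xof l j : X_law (Xof l j.+2) = Xmass l j.
Proof. exact/cvg_lim/odd_ratio_Xof. Qed.

Lemma X_law_off x : (forall l j, x != Xof l j.+2) -> X_law x = 0.
Proof. by move=> x_off; rewrite /X_law /odd_density odd_ratio_off // lim_cst. Qed.

Lemma cvg_odd_ratio_X_law x : @odd_ratio R (fun n => Xval R n == x) @ \oo --> X_law x.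
Proof.
have [[l [j ->]] | x_off] := pselect (exists l j, x = Xof l j.+2).
  by rewrite X_law_Xof; apply: odd_ratio_Xof.
have {}x_off l j : x != Xof l j.+2 by apply/eqP => xE; apply: x_off; exists l, j.
by rewrite X_law_off // odd_ratio_off //; apply: cvg_cst.
Qed.

End XLaw.

Section PairSums.
Variable R : realType.
Local Open Scope ereal_scope.

Lemma esum_range (T T' : choiceType) (e : T -> T') (G : T' -> \bar R) :
  injective e -> (forall y, 0 <= G y) -> (forall y, ~ range e y -> G y = 0) ->
  \esum_(y in [set: T']) G y = \esum_(x in [set: T]) G (e x).
Proof.
move=> e_inj G_ge0 G_off; rewrite (esumID (range e)) // setTI.
rewrite [X in _ + X]esum1 ?adde0 => [|y [_]]; last exact: G_off.
by rewrite esum_image // => ? ? _ _; apply: e_inj.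
Qed.

Lemma esum_pairE (u : nat -> nat -> \bar R) : (forall l j, 0 <= u l j) ->
  \esum_(p in [set: nat * nat]) u p.1 p.2 = \sum_(l <oo) \sum_(j <oo) u l j.
Proof.
move=> u_ge0; have -> : [set: nat * nat] = [set: nat] `*`` (fun=> [set: nat]).
  by apply/seteqP; split=> [[]|[]].
rewrite -esum_esum // nneseries_esumT; last by move=> l; apply: nneseries_ge0.
by apply: eq_esum => l _; rewrite nneseries_esumT.
Qed.

Lemma nneseries_EFin_cvg (u : nat -> R) U : series u @ \oo --> U ->
  \sum_(i <oo) (u i)%:E = U%:E.
Proof.
move=> cvg_u; have -> : (fun n => \sum_(0 <= i < n) (u i)%:E) = EFin \o series u.
  by apply/funext => n; rewrite /= /series /= sumEFin.
by rewrite EFin_lim ?(cvg_lim _ cvg_u) //; apply/cvg_ex; exists U.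
Qed.

Lemma esum_pair_cvg (g : nat -> nat -> R) (G : nat -> R) S :
  (forall l j, (0 <= g l j)%R) ->
  (forall l, series (g l) @ \oo --> G l) -> series G @ \oo --> S ->
  \esum_(p in [set: nat * nat]) (g p.1 p.2)%:E = S%:E.
Proof.
move=> g_ge0 cvg_g cvg_G.
rewrite (esum_pairE (u := fun l j => (g l j)%:E)); last by move=> l j; rewrite lee_fin.
rewrite -(nneseries_EFin_cvg cvg_G); congr (limn _); apply/funext => n.
by apply: eq_bigr => l _; apply: nneseries_EFin_cvg.
Qed.

Lemma esum_posnegB (T : choiceType) (D : set T) (f g : T -> R) (c d : R) :
  (forall x, 0 <= f x)%R -> (forall x, 0 <= g x)%R ->
  \esum_(x in D) (f x)%:E = c%:E -> \esum_(x in D) (g x)%:E = d%:E ->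
  \esum_(x in D) (Num.max (f x - g x) 0)%:E -
  \esum_(x in D) (Num.max (- (f x - g x)) 0)%:E = (c - d)%:E.
Proof.
move=> f_ge0 g_ge0 sum_f sum_g.
have summable_fin (u : T -> R) e : (forall x, 0 <= u x)%R ->
    \esum_(x in D) (u x)%:E = e%:E -> summable D (fun x => (u x)%:E).
  move=> u_ge0 sum_u; rewrite /summable (eq_esum (b := fun x => (u x)%:E)).
    by rewrite sum_u ltry.
  by move=> x _; rewrite gee0_abs // lee_fin.
rewrite EFinB -sum_f -sum_g -(esumB (f := fun x => (f x)%:E) (g := fun x => (g x)%:E)).
- by congr (_ - _); apply: eq_esum => x _; rewrite ?funeposE ?funenegE /= EFin_max.
- exact: summable_fin sum_f.
- exact: summable_fin sum_g.
- by move=> x _; rewrite lee_fin.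
- by move=> x _; rewrite lee_fin.
Qed.

End PairSums.

Lemma cvg_seriesMl (R : numFieldType) (u : nat -> R) U c :
  series u @ \oo --> U -> series (fun j => c * u j) @ \oo --> c * U.
Proof.
move=> cvg_u; have -> : series (fun j => c * u j) = (fun n => c * series u n).
  by apply/funext => n; rewrite /series /= mulr_sumr.
exact: cvgMl_tmp.
Qed.

Section HalfSeries.
Variable R : realType.
Local Notation h := (2^-1 : R).

Definition halfpoly (c0 c1 c2 : R) (j : nat) : R :=
  h ^+ j.+1 * (c0 + c1 * j%:R + c2 * j%:R ^+ 2).

Lemma series_halfpolyE c0 c1 c2 n : series (halfpoly c0 c1 c2) n =
  (c0 + c1 + 3 * c2) * (1 - h ^+ n) - (c1 + 2 * c2) * (n%:R * h ^+ n)
  - c2 * (n%:R ^+ 2 * h ^+ n).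
Proof.
elim: n => [|n IHn]; first by rewrite /series /= big_geq // expr0; ring.
by rewrite seriesSr IHn /halfpoly !exprS -natr1; field.
Qed.

Lemma halfpoly_ge0 c0 c1 c2 j : 0 <= c0 -> 0 <= c1 -> 0 <= c2 ->
  0 <= halfpoly c0 c1 c2 j.
Proof.
move=> *; rewrite mulr_ge0 ?exprn_ge0 ?invr_ge0 //.
by rewrite !addr_ge0 ?mulr_ge0 ?exprn_ge0.
Qed.

Lemma cvg_halfpoly0 c0 c1 c2 : 0 <= c0 -> 0 <= c1 -> 0 <= c2 ->
  halfpoly c0 c1 c2 @ \oo --> 0.
Proof.
move=> c0_ge0 c1_ge0 c2_ge0; apply: cvg_series_cvg_0; apply: nondecreasing_is_cvgn.
  by apply: (@nondecreasing_series _ _ xpredT) => n _ _; apply: halfpoly_ge0.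
exists (c0 + c1 + 3 * c2) => _ [n _ <-]; rewrite series_halfpolyE.
have hn_ge0 : 0 <= h ^+ n by rewrite exprn_ge0 // invr_ge0.
have hn_le1 : h ^+ n <= 1 by rewrite exprn_ile1 // ?invr_ge0 // invf_le1 // ler1n.
have : 0 <= n%:R * h ^+ n by rewrite mulr_ge0.
have : 0 <= n%:R ^+ 2 * h ^+ n by rewrite mulr_ge0 ?exprn_ge0.
nra.
Qed.

Lemma cvg_natrX_halfpow k : (k <= 2)%N -> (fun n => n%:R ^+ k * h ^+ n) @ \oo --> 0.
Proof.
move=> k_le2; have -> : (fun n => n%:R ^+ k * h ^+ n) =
    (fun n => 2 * halfpoly (k == 0)%:R (k == 1)%:R (k == 2)%:R n).
  apply/funext => n; rewrite /halfpoly exprS.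
  by case: k k_le2 => [|[|[|]]] //= _; field.
by rewrite -[X in _ --> X](mulr0 2); apply: cvgMl_tmp; apply: cvg_halfpoly0.
Qed.

Lemma cvg_series_halfpoly c0 c1 c2 :
  series (halfpoly c0 c1 c2) @ \oo --> c0 + c1 + 3 * c2.
Proof.
rewrite (funext (series_halfpolyE c0 c1 c2)).
rewrite -[X in _ --> X]
  (_ : (c0 + c1 + 3 * c2) * (1 - 0) - (c1 + 2 * c2) * 0 - c2 * 0 = _); last by ring.
apply: cvgB; [apply: cvgB|]; apply: cvgMl_tmp.
- apply: cvgB; first exact: cvg_cst.
  by apply: cvg_expr; rewrite ger0_norm ?invf_lt1 ?ltr1n.
- by have := cvg_natrX_halfpow (isT : 1 <= 2)%N; under eq_fun do rewrite expr1.
- exact: (cvg_natrX_halfpow (isT : 2 <= 2)%N).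
Qed.

Lemma cvg_series_halfpoly_eq (u : nat -> R) K c0 c1 c2 S :
  (forall j, u j = K * halfpoly c0 c1 c2 j) -> S = K * (c0 + c1 + 3 * c2) ->
  series u @ \oo --> S.
Proof.
by move=> /funext -> ->; apply: cvg_seriesMl; apply: cvg_series_halfpoly.
Qed.

Lemma cvg_series_half_geometric (q : R) : `|q| < 2 ->
  series (fun j => h ^+ j.+1 * q ^+ j) @ \oo --> (2 - q)^-1.
Proof.
move=> q_lt2; have -> : (fun j => h ^+ j.+1 * q ^+ j) = geometric h (h * q).
  by apply/funext => j /=; rewrite exprMn exprS mulrA.
have -> : (2 - q)^-1 = h * (1 - h * q)^-1.
  rewrite -invfM mulrBr mulr1 mulrA divff ?pnatr_eq0 // mul1r.
  by congr (_^-1); field.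
apply: cvg_geometric_series; rewrite normrM ger0_norm ?invr_ge0 //.
by rewrite mulrC ltr_pdivrMr ?ltr0n // mul1r.
Qed.

End HalfSeries.

Section Moments.
Variable R : realType.
Local Notation a := (log2_3 R).
Local Notation h := (2^-1 : R).
Local Notation Xof := (Xof R).
Local Notation Xmass := (Xmass R).
Local Notation law := (@X_law R).

Lemma law_expectE (f : R -> R) : law_expect law f =
  (\esum_(p in [set: nat * nat])
     (Num.max (Xmass p.1 p.2 * f (Xof p.1 p.2.+2)) 0)%:E -
   \esum_(p in [set: nat * nat])
     (Num.max (- (Xmass p.1 p.2 * f (Xof p.1 p.2.+2))) 0)%:E)%E.
Proof.
have reduce (g : R -> R) : \esum_(x in [set: R]) (Num.max (law x * g x) 0)%:E =
    \esum_(p in [set: nat * nat]) (Num.max (Xmass p.1 p.2 * g (Xof p.1 p.2.+2)) 0)%:E.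
  rewrite (esum_range (e := fun p => Xof p.1 p.2.+2)).
  - by apply: eq_esum => p _; rewrite X_law_Xof.
  - by move=> [l j] [l' j'] /Xof_inj /= [-> [->]].
  - by move=> x; rewrite lee_fin le_max lexx orbT.
  move=> x x_off; rewrite X_law_off ?mul0r ?maxxx // => l j.
  by apply/eqP => xE; apply: x_off; exists (l, j).
rewrite /law_expect reduce; congr (_ - _)%E.
transitivity (\esum_(x in [set: R]) (Num.max (law x * - f x) 0)%:E).
  by apply: eq_esum => x _; rewrite mulrN.
by rewrite reduce; apply: eq_esum => p _; rewrite mulrN.
Qed.

Lemma law_expect_ge0 (f : R -> R) : (forall x, 0 <= f x) -> law_expect law f =
  \esum_(p in [set: nat * nat]) (Xmass p.1 p.2 * f (Xof p.1 p.2.+2))%:E.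
Proof.
move=> f_ge0; rewrite law_expectE [X in (_ - X)%E]esum1 ?sube0 => [|p _].
  by apply: eq_esum => p _; rewrite max_l // mulr_ge0 ?Xmass_ge0.
by rewrite max_r // oppr_le0 mulr_ge0 ?Xmass_ge0.
Qed.

Lemma X_mgf t : - ln 2 < t -> t < ln 2 / (a - 1) ->
  law_expect law (fun x => expR (t * x)) =
  (expR (t * (a - 2)) / (4 * (1 - expR (t * (a - 1)) / 2) * (1 - expR (- t) / 2)))%:E.
Proof.
move=> t_gt t_lt; have a1_gt0 : 0 < a - 1 by rewrite subr_gt0 log2_3_gt1.
set q1 := expR (t * (a - 1)); set q2 := expR (- t); set C := expR (t * (a - 2)).
have expR_ln2 : expR (ln 2) = 2 :> R by rewrite lnK // posrE ltr0n.
have q1_lt2 : `|q1| < 2.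
  by rewrite gtr0_norm ?expR_gt0 // -expR_ln2 ltr_expR -ltr_pdivlMr.
have q2_lt2 : `|q2| < 2 by rewrite gtr0_norm ?expR_gt0 // -expR_ln2 ltr_expR ltrNl.
rewrite law_expect_ge0 => [|x]; last exact: expR_ge0.
apply: (esum_pair_cvg (g := fun l j => Xmass l j * expR (t * Xof l j.+2))
  (G := fun l => C * (2 - q2)^-1 * (h ^+ l.+1 * q1 ^+ l))).
- by move=> l j; rewrite mulr_ge0 ?Xmass_ge0 ?expR_ge0.
- move=> l; have -> : (fun j => Xmass l j * expR (t * Xof l j.+2)) =
      (fun j => C * h ^+ l.+1 * q1 ^+ l * (h ^+ j.+1 * q2 ^+ j)).
    apply/funext => j.
    have -> : t * Xof l j.+2 = t * (a - 2) + l%:R * (t * (a - 1)) + j%:R * - t.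
      by rewrite /Xof -[l.+1]addn1 -[j.+2]addn2 !natrD; ring.
    by rewrite !expRD !expRM_natl -/q1 -/q2 -/C /Xmass; ring.
  rewrite (_ : C / (2 - q2) * _ = C * h ^+ l.+1 * q1 ^+ l * (2 - q2)^-1); last by ring.
  exact/cvg_seriesMl/cvg_series_half_geometric.
have -> : C / (4 * (1 - q1 / 2) * (1 - q2 / 2)) = C * (2 - q2)^-1 * (2 - q1)^-1.
  have := q1_lt2; have := q2_lt2; rewrite !gtr0_norm ?expR_gt0 // => ? ?.
  by field; rewrite !subr_eq0 ?gt_eqF //; lra.
exact/cvg_seriesMl/cvg_series_half_geometric.
Qed.

Lemma X_mean : law_expect law id = (2 * a - 4)%:E.
Proof.
pose A p := Xmass p.1 p.2 * (p.1.+1%:R * a).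
pose B p := Xmass p.1 p.2 * (p.1 + p.2.+2)%N%:R.
have a_ge0 : 0 <= a by rewrite ltW // (lt_trans ltr01 (log2_3_gt1 R)).
have A_ge0 p : 0 <= A p by rewrite mulr_ge0 ?Xmass_ge0 // mulr_ge0 ?ler0n.
have B_ge0 p : 0 <= B p by rewrite mulr_ge0 ?Xmass_ge0.
have sumA : (\esum_(p in [set: nat * nat]) (A p)%:E = (2 * a)%:E)%E.
  apply: (esum_pair_cvg (g := fun l j => A (l, j))
    (G := fun l => a * halfpoly 1 1 0 l)).
  - by move=> l j; apply: A_ge0.
  - move=> l; apply: (cvg_series_halfpoly_eq (K := h ^+ l.+1 * l.+1%:R * a)
      (c0 := 1) (c1 := 0) (c2 := 0)) => [j|]; rewrite /A /Xmass /halfpoly /=.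
      by ring.
    by rewrite -[l.+1]addn1 natrD; ring.
  by apply: (cvg_series_halfpoly_eq (K := a)) => [j|] //; ring.
have sumB : (\esum_(p in [set: nat * nat]) (B p)%:E = 4%:E)%E.
  apply: (esum_pair_cvg (g := fun l j => B (l, j)) (G := fun l => halfpoly 3 1 0 l)).
  - by move=> l j; apply: B_ge0.
  - move=> l; apply: (cvg_series_halfpoly_eq (K := h ^+ l.+1)
      (c0 := l%:R + 2) (c1 := 1) (c2 := 0)) => [j|]; rewrite /B /Xmass /halfpoly /=.
      by rewrite -[j.+2]addn2 !natrD; ring.
    by ring.
  by apply: (cvg_series_halfpoly_eq (K := 1)) => [j|] //; ring.
have XE p : Xmass p.1 p.2 * Xof p.1 p.2.+2 = A p - B p by rewrite /A /B /Xof; ring.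
rewrite law_expectE -(esum_posnegB A_ge0 B_ge0 sumA sumB).
by congr (_ - _)%E; apply: eq_esum => p _; rewrite XE.
Qed.

Lemma X_var : law_var law = (2 * ((a - 1) ^+ 2 + 1))%:E.
Proof.
rewrite /law_var X_mean law_expect_ge0 => [|x]; last exact: sqr_ge0.
apply: (esum_pair_cvg (g := fun l j => Xmass l j * (Xof l j.+2 - (2 * a - 4)) ^+ 2)
  (G := halfpoly ((a - 1) ^+ 2 + 2) (- 2 * (a - 1) ^+ 2) ((a - 1) ^+ 2))).
- by move=> l j; rewrite mulr_ge0 ?Xmass_ge0 ?sqr_ge0.
- move=> l; set d := l%:R * (a - 1) + (2 - a).
  apply: (cvg_series_halfpoly_eq (K := h ^+ l.+1)
    (c0 := d ^+ 2) (c1 := - 2 * d) (c2 := 1)) => [j|].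
    by rewrite /Xmass /halfpoly /Xof /d -[l.+1]addn1 -[j.+2]addn2 !natrD; ring.
  by rewrite /halfpoly /d; ring.
by apply: (cvg_series_halfpoly_eq (K := 1)) => [j|]; rewrite ?mul1r //; ring.
Qed.

End Moments.

Theorem mainTheorem14 (R : realType) :
  (* the law is well defined: each level set {n odd : X(n) = x} has a natural density *)
  (forall x : R, @odd_ratio R (fun n => @Xval R n == x) @ \oo --> @X_law R x) /\
  (* (1) moment generating function *)
  (forall t : R, - ln 2 < t -> t < ln 2 / (log2_3 R - 1) ->
     law_expect (@X_law R) (fun x => expR (t * x)) =
     (expR (t * (log2_3 R - 2)) /
       (4 * (1 - expR (t * (log2_3 R - 1)) / 2) * (1 - expR (- t) / 2)))%:E) /\
  (* (2) mean and variance *)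
  law_expect (@X_law R) id = (2 * log2_3 R - 4)%:E /\
  law_var (@X_law R) = (2 * ((log2_3 R - 1) ^+ 2 + 1))%:E.
Proof.
split; first exact: cvg_odd_ratio_X_law.
split; first exact: X_mgf.
by split; [exact: X_mean | exact: X_var].
Qed.
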